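(* Let $\mathfrak{g}$ be a $6$-dimensional real nilpotent Lie algebra with a complex structure $J$. Then $\mathfrak{g}^*$ has a basis $\{e^1,\dots,e^6\}$ such that $e^1+ie^2$ is a closed $(1,0)$-form (i.e. $d(e^1+ie^2)=0$ and $e^1+ie^2\in\Lambda^{1,0}$) and $de^3\in\langle e^{12}\rangle$, $de^4\in\langle e^{12},e^{13},e^{23}\rangle$, $de^5\in\langle e^{12},e^{13},e^{14},e^{23},e^{24},e^{34}\rangle$, $de^6\in\langle e^{12},e^{13},e^{14},e^{15},e^{23},e^{24},e^{25},e^{34}\rangle$.
   Context: A complex structure is a linear $J\colon\mathfrak{g}\to\mathfrak{g}$ with $J^2=-1$ and $[JX,JY]=[X,Y]+J[JX,Y]+J[X,JY]$ for all $X,Y$. $d\alpha(X,Y)=-\alpha([X,Y])$, extended complex-linearly; $\Lambda^{1,0}$ is the space of complex-linear forms $\omega$ on $\mathfrak{g}$ with $\omega(JX)=i\,\omega(X)$. $e^{ij}=e^i\wedge e^j$. *)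

From HB Require Import structures.
From mathcomp Require Import all_boot all_order all_algebra.
From mathcomp Require Import Rstruct.
From mathcomp Require Import complex.
Set Implicit Arguments. Unset Strict Implicit. Unset Printing Implicit Defensive.
Import Order.TTheory GRing.Theory Num.Theory.
Local Open Scope ring_scope.

(* The underlying 6-dimensional real vector space of the Lie algebra g,
   identified with row vectors R^6 (every 6-dim real space is isomorphic to it). *)
Notation V := 'rV[Rdefinitions.R]_6.

Definition is_lie_bracket (br : V -> V -> V) : Prop :=
  [/\ (forall (a : Rdefinitions.R) x y z, br (a *: x + y) z = a *: br x z + br y z),
      (forall (a : Rdefinitions.R) x y z, br z (a *: x + y) = a *: br z x + br z y),
      (forall x, br x x = 0) &
      (forall x y z, br x (br y z) + br y (br z x) + br z (br x y) = 0)].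

Fixpoint iter_br (br : V -> V -> V) (xs : seq V) (y : V) : V :=
  if xs is x :: xs' then br x (iter_br br xs' y) else y.

(* Nilpotent: the lower central series terminates, i.e. for some k every
   bracket of length k+1 vanishes (the k-th term of the lower central series
   g^1 = g, g^{j+1} = [g, g^j] is spanned by such brackets). *)
Definition nilpotent_bracket (br : V -> V -> V) : Prop :=
  exists k : nat, forall (xs : seq V) (y : V), size xs = k -> iter_br br xs y = 0.

(* A complex structure J (acting on X as X *m J):
   J^2 = -1 and the integrability (Nijenhuis) condition. *)
Definition is_complex_structure (br : V -> V -> V) (J : 'M[Rdefinitions.R]_6) : Prop :=
  J *m J = - 1%:M /\
  forall X Y, br (X *m J) (Y *m J)
              = br X Y + (br (X *m J) Y) *m J + (br X (Y *m J)) *m J.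

(* The dual basis element e^k (k = 1..6) determined by the matrix E:
   e^k(X) = (X *m E)_{k}; the e^k form a basis of g^* iff E is invertible. *)
Definition ef (E : 'M[Rdefinitions.R]_6) (k : nat) (X : V) : Rdefinitions.R :=
  (X *m E) 0 (inord k.-1).

Definition d1 (br : V -> V -> V) (alpha : V -> Rdefinitions.R) (X Y : V) : Rdefinitions.R :=
  - alpha (br X Y).

Definition wedge (a b : V -> Rdefinitions.R) (X Y : V) : Rdefinitions.R :=
  a X * b Y - a Y * b X.

Definition in_span2 (E : 'M[Rdefinitions.R]_6) (S : seq (nat * nat))
  (w : V -> V -> Rdefinitions.R) : Prop :=
  exists c : nat * nat -> Rdefinitions.R, forall X Y,
    w X Y = \sum_(p <- S) c p * wedge (ef E p.1) (ef E p.2) X Y.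

Definition cform (a b : V -> Rdefinitions.R) (X : V) : Rdefinitions.R[i] :=
  Complex (a X) (b X).

Definition is_10_form (J : 'M[Rdefinitions.R]_6) (omega : V -> Rdefinitions.R[i]) : Prop :=
  forall X, omega (X *m J) = 'i * omega X.

Definition closed_cform (br : V -> V -> V) (omega : V -> Rdefinitions.R[i]) : Prop :=
  forall X Y, - omega (br X Y) = 0.

(* In a nilpotent g
   the subspace [g,g] + J[g,g] is proper (otherwise it would reproduce itself
   along the whole lower central series), so some nonzero linear form c kills
   it; then omega = c - i cJ is a closed (1,0)-form, and its kernel W, a
   J-invariant subspace of real dimension 4, contains [g,g].  For a nonzero
   central vector z of g in W, ad(zJ) commutes with J and kills z and zJ; being
   nilpotent and complex-linear on the complex 2-dimensional space W, it
   vanishes there, so z and zJ are central in W.  Repeatedly taking a vector that ad(g) pushes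
   into a smaller invariant subspace (possible by nilpotency) gives v5, v4 in
   the centre of W and v3, v2 in W with [g, v_j] inside the span of the later
   ones.  Adding v0 with c(v0) = 1, (cJ)(v0) = 0 and v1 = v0 J gives a basis
   whose dual basis e^1, ..., e^6 satisfies e^1 + i e^2 = omega and the
   structure equations, read off from the flag. *)

From HB Require Import structures.
From mathcomp Require Import all_boot all_order all_algebra.
From mathcomp Require Import Rstruct complex.
From mathcomp Require Import ring zify.
From Stdlib Require Import Classical.
Set Implicit Arguments. Unset Strict Implicit. Unset Printing Implicit Defensive.
Import GRing.Theory.
Local Open Scope ring_scope.

Section RowSpaces.
Variable F : fieldType.

Lemma mxrank_adds_row_notin m n (v : 'rV[F]_n) (U : 'M_(m, n)) :
  ~~ (v <= U)%MS -> \rank (v + U)%MS = (\rank U).+1.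
Proof.
move=> vU; apply/eqP; rewrite eqn_leq; apply/andP; split.
  rewrite (leq_trans (mxrank_adds_leqif v U).1) //.
  by rewrite -[(\rank U).+1]add1n leq_add2r rank_leq_row.
rewrite ltn_neqAle (mxrank_leqif_sup (addsmxSr v U)).2 addsmx_sub submx_refl andbT vU.
exact: mxrankS (addsmxSr v U).
Qed.

Lemma exists_row_notin m1 m2 n (A : 'M[F]_(m1, n)) (B : 'M[F]_(m2, n)) :
  (\rank B < \rank A)%N -> exists2 y : 'rV_n, (y <= A)%MS & ~~ (y <= B)%MS.
Proof.
move=> ltBA; have /row_subPn [i Ai] : ~~ (A <= B)%MS.
  by apply: contraTN ltBA => /mxrankS; rewrite leqNgt.
by exists (row i A); rewrite ?row_sub.
Qed.

Lemma dual_form n (B : 'M[F]_n) (f : 'cV_n) k (X : 'rV_n) :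
  B \in unitmx -> B *m f = delta_mx k 0 -> (X *m invmx B) 0 k = (X *m f) 0 0.
Proof. by move=> Bu Bf; rewrite -(mulKmx Bu f) Bf mulmxA -colE [RHS]mxE. Qed.

End RowSpaces.

Section ComplexStructure.
Variables (K : realFieldType) (n : nat) (J : 'M[K]_n).
Hypothesis JJ : J *m J = - 1%:M.

Lemma mulmxJJ m (A : 'M_(m, n)) : A *m J *m J = - A.
Proof. by rewrite -mulmxA JJ mulmxN mulmx1. Qed.

(* Right multiplication by [cmx z] makes the row vectors a K[i]-vector space. *)
Definition cmx (z : K[i]) : 'M[K]_n := (complex.Re z)%:M + complex.Im z *: J.

Lemma cmx0 : cmx 0 = 0.
Proof. by rewrite /cmx /= scale0r addr0 raddf0. Qed.

Lemma cmx1 : cmx 1 = 1%:M.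
Proof. by rewrite /cmx /= scale0r addr0. Qed.

Lemma cmxM z1 z2 : cmx (z1 * z2) = cmx z1 *m cmx z2.
Proof.
case: z1 z2 => [a b] [c d]; rewrite /cmx /GRing.mul /=.
rewrite mulmxDl !mulmxDr !mul_scalar_mx mul_mx_scalar -!scalemxAl -scalemxAr JJ.
by apply/matrixP => i j; rewrite !mxE /=; ring.
Qed.

Lemma cmx_comm (A : 'M_n) z : A *m J = J *m A -> A *m cmx z = cmx z *m A.
Proof.
move=> AJ; rewrite /cmx mulmxDl mulmxDr -!scalemxAl -scalemxAr AJ.
by rewrite mul_scalar_mx mul_mx_scalar.
Qed.

Lemma cmx_stable m (P : 'M_(m, n)) z : stablemx P J -> (P *m cmx z <= P)%MS.
Proof.
move=> PJ; rewrite /cmx mulmxDr mul_mx_scalar -scalemxAr.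
by rewrite addmx_sub ?scalemx_sub ?submx_refl.
Qed.

Lemma cmx_notin_eq0 m (P : 'M_(m, n)) (w : 'rV_n) z :
  stablemx P J -> ~~ (w <= P)%MS -> (w *m cmx z <= P)%MS -> z = 0.
Proof.
move=> PJ wP wzP; apply/eqP; apply: contraNT wP => z0.
have -> : w = w *m cmx z *m cmx z^-1 by rewrite -mulmxA -cmxM mulfV // cmx1 mulmx1.
exact: submx_trans (submxMr _ wzP) (cmx_stable _ PJ).
Qed.

Definition cspan m (A : 'M[K]_(m, n)) := (A + A *m J)%MS.

Lemma cspan_stable m (A : 'M_(m, n)) : stablemx (cspan A) J.
Proof.
rewrite /cspan addsmxMr mulmxJJ addsmxC.
by rewrite addsmxS ?submx_refl // eqmx_opp.
Qed.

Lemma cspan_sub m1 m2 (A : 'M_(m1, n)) (S : 'M_(m2, n)) :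
  stablemx S J -> (A <= S)%MS -> (cspan A <= S)%MS.
Proof. by move=> SJ AS; rewrite addsmx_sub AS (submx_trans (submxMr J AS) SJ). Qed.

Lemma sub_cspanP (y w : 'rV_n) : (y <= cspan w)%MS -> exists z, y = w *m cmx z.
Proof.
move/sub_addsmxP => [[a b] /= ->]; exists (Complex (a 0 0) (b 0 0)).
rewrite /cmx mulmxDr mul_mx_scalar -scalemxAr mulmxA.
by rewrite /= {1}[a]mx11_scalar {1}[b]mx11_scalar !mul_scalar_mx scalemxAl.
Qed.

Lemma mxrank_adds_cspan m (P : 'M_(m, n)) (w : 'rV_n) :
  stablemx P J -> ~~ (w <= P)%MS -> \rank (cspan w + P)%MS = (\rank P).+2.
Proof.
move=> PJ wP; rewrite /cspan (addsmxC w) -addsmxA mxrank_adds_row_notin.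
  by rewrite mxrank_adds_row_notin.
apply/negP => /sub_addsmxP [[a p] /= wJE].
have : w *m cmx (Complex (- a 0 0) 1) = p *m P.
  rewrite /cmx /= mulmxDr mul_mx_scalar scale1r wJE {2}[a]mx11_scalar.
  by rewrite mul_scalar_mx scaleNr addKr.
move/(congr1 (fun A => A <= P)%MS); rewrite submxMl => /(cmx_notin_eq0 PJ wP).
by move/(congr1 (@complex.Im K)) => /eqP; rewrite oner_eq0.
Qed.

Lemma mxrank_cspan (w : 'rV_n) : w != 0 -> \rank (cspan w) = 2%N.
Proof.
move=> w0; have := @mxrank_adds_cspan _ (0 : 'M_n) w.
by rewrite mul0mx sub0mx submx0 w0 addsmx0 mxrank0 => /(_ isT isT).
Qed.

Lemma kermx_stable (A : 'M_n) : A *m J = J *m A -> stablemx (kermx A) J.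
Proof. by move=> AJ; apply/sub_kermxP; rewrite -mulmxA -AJ mulmxA mulmx_ker mul0mx. Qed.

Lemma nilpotent_cmx_eigen m (P : 'M_(m, n)) (A : 'M_n) (w : 'rV_n) z N :
  A *m J = J *m A -> (P <= kermx A)%MS -> stablemx P J -> ~~ (w <= P)%MS ->
  (w *m A - w *m cmx z <= P)%MS -> A ^+ N = 0 -> z = 0.
Proof.
move=> AJ PA PJ wP wAz AN.
have wAk k : (w *m A ^+ k - w *m cmx (z ^+ k) <= P)%MS.
  elim: k => [|k IH]; first by rewrite !expr0 cmx1 mulmx1 subrr sub0mx.
  have -> : w *m A ^+ k.+1 - w *m cmx (z ^+ k.+1)
      = (w *m A ^+ k - w *m cmx (z ^+ k)) *m A + (w *m A - w *m cmx z) *m cmx (z ^+ k).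
    rewrite exprSr exprS cmxM !mulmxBl !mulmxA -(mulmxA w (cmx _) A) -cmx_comm // mulmxA.
    by rewrite addrA subrK.
  rewrite (sub_kermxP (submx_trans IH PA)) add0r.
  by rewrite (submx_trans (submxMr _ wAz)) ?cmx_stable.
have := wAk N; rewrite AN mulmx0 sub0r eqmx_opp.
by move/(cmx_notin_eq0 PJ wP)/eqP; rewrite expf_eq0 => /andP [_ /eqP].
Qed.

(* The kernel of the complex form X |-> X c - i X J c. *)
Definition ker_omega (c : 'cV[K]_n) := kermx (row_mx c (J *m c)).

Lemma sub_ker_omegaP m (A : 'M_(m, n)) c :
  reflect (A *m c = 0 /\ A *m J *m c = 0) (A <= ker_omega c)%MS.
Proof.
apply: (iffP sub_kermxP) => [|[Ac AJc]]; rewrite mul_mx_row mulmxA.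
  by move/eqP; rewrite row_mx_eq0 => /andP [/eqP -> /eqP ->].
by rewrite Ac AJc row_mx0.
Qed.

Lemma ker_omega_coord (v : 'rV_n) c :
  (v <= ker_omega c)%MS -> (v *m c) 0 0 = 0 /\ (v *m J *m c) 0 0 = 0.
Proof. by case/sub_ker_omegaP => -> ->; rewrite mxE. Qed.

Lemma ker_omega_stable c : stablemx (ker_omega c) J.
Proof.
have /sub_ker_omegaP [Kc KJc] := submx_refl (ker_omega c).
by apply/sub_ker_omegaP; rewrite KJc mulmxJJ mulNmx Kc oppr0.
Qed.

End ComplexStructure.

Section OmegaRank.
Variables (K : realFieldType) (n : nat) (J : 'M[K]_n).
Hypothesis JJ : J *m J = - 1%:M.

Lemma mxrank_omega (c : 'cV[K]_n) : c != 0 -> \rank (row_mx c (J *m c)) = 2%N.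
Proof.
move=> c0; have JJt : J^T *m J^T = - 1%:M by rewrite -trmx_mul JJ linearN /= trmx1.
rewrite -mxrank_tr tr_row_mx trmx_mul -addsmxE.
by rewrite (mxrank_cspan JJt) ?trmx_eq0.
Qed.

Lemma mxrank_ker_omega (c : 'cV[K]_n) : c != 0 -> \rank (ker_omega J c) = (n - 2)%N.
Proof. by move=> c0; rewrite mxrank_ker mxrank_omega. Qed.

Lemma exists_omega_dual (c : 'cV[K]_n) :
  c != 0 -> exists v : 'rV_n, v *m c = 1%:M /\ v *m J *m c = 0.
Proof.
move=> c0; have /row_fullP [B BcJc] : row_full (row_mx c (J *m c)).
  by rewrite /row_full mxrank_omega.
have := congr1 (row 0) BcJc; rewrite row_mul mul_mx_row row1 mulmxA => vcJc.
exists (row 0 B); split.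
  rewrite -[_ *m c](row_mxKl _ (row 0 B *m J *m c)) vcJc.
  by apply/rowP => j; rewrite ord1 !mxE.
rewrite -[_ *m J *m c](row_mxKr (row 0 B *m c)) vcJc.
by apply/rowP => j; rewrite ord1 !mxE.
Qed.

End OmegaRank.

Local Notation R := Rdefinitions.R.

Section LieBracket.
Variable br : V -> V -> V.
Hypothesis Hbr : is_lie_bracket br.

Lemma brDl x y z : br (x + y) z = br x z + br y z.
Proof. by case: (Hbr) => brl _ _ _; rewrite -[x]scale1r brl !scale1r. Qed.

Lemma brDr x y z : br z (x + y) = br z x + br z y.
Proof. by case: (Hbr) => _ brr _ _; rewrite -[x]scale1r brr !scale1r. Qed.

Lemma br0l z : br 0 z = 0.
Proof. by apply: (addIr (br 0 z)); rewrite -brDl !add0r. Qed.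

Lemma br0r z : br z 0 = 0.
Proof. by apply: (addIr (br z 0)); rewrite -brDr !add0r. Qed.

Lemma brZl a x z : br (a *: x) z = a *: br x z.
Proof. by case: (Hbr) => brl _ _ _; rewrite -[a *: x]addr0 brl br0l addr0. Qed.

Lemma brZr a x z : br z (a *: x) = a *: br z x.
Proof. by case: (Hbr) => _ brr _ _; rewrite -[a *: x]addr0 brr br0r addr0. Qed.

Lemma brxx x : br x x = 0.
Proof. by case: (Hbr). Qed.

Lemma brC x y : br x y = - br y x.
Proof.
apply/eqP; rewrite -addr_eq0; apply/eqP.
by have := brxx (x + y); rewrite brDl !brDr !brxx add0r addr0 addrC.
Qed.

Lemma br_suml (I : Type) (r : seq I) (P : pred I) (F : I -> V) z :
  br (\sum_(i <- r | P i) F i) z = \sum_(i <- r | P i) br (F i) z.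
Proof. exact: (big_morph (br^~ z) (fun x y => brDl x y z) (br0l z)). Qed.

Lemma br_sumr (I : Type) (r : seq I) (P : pred I) (F : I -> V) z :
  br z (\sum_(i <- r | P i) F i) = \sum_(i <- r | P i) br z (F i).
Proof. exact: (big_morph (br z) (fun x y => brDr x y z) (br0r z)). Qed.

Definition admx u : 'M[R]_6 := \matrix_(i < 6) br u (delta_mx 0 i).

Lemma admxE u x : x *m admx u = br u x.
Proof.
rewrite [in RHS](row_sum_delta x) br_sumr mulmx_sum_row.
by apply: eq_bigr => i _; rewrite brZr rowK.
Qed.

Lemma iter_br_nseq u k x : iter_br br (nseq k u) x = x *m admx u ^+ k.
Proof. by elim: k => [|k /= ->]; rewrite ?expr0 ?mulmx1 // exprSr mulmxA admxE. Qed.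

End LieBracket.

Section NilpotentLie.
Variable br : V -> V -> V.
Hypotheses (Hbr : is_lie_bracket br) (Hnil : nilpotent_bracket br).

Lemma nilpotent_ad_step (P : V -> Prop) m (U : 'M[R]_(m, 6)) y :
  (forall x v, P v -> P (br x v)) -> P y -> ~~ (y <= U)%MS ->
  exists w, [/\ P w, ~~ (w <= U)%MS & forall x, (br x w <= U)%MS].
Proof.
move=> Pbr Py yU; apply: NNPP => none; have [N HN] := Hnil.
(* Otherwise brackets can be stacked on y forever without entering U. *)
suff chain k : exists xs,
    [/\ size xs = k, P (iter_br br xs y) & ~~ (iter_br br xs y <= U)%MS].
  by have [xs [/HN-> _]] := chain N; rewrite sub0mx.
elim: k => [|k [xs [sz Pw wU]]]; first by exists [::].
have [x xwU] : exists x, ~~ (br x (iter_br br xs y) <= U)%MS.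
  apply: NNPP => hx; apply: none; exists (iter_br br xs y); split => // x.
  by apply/idPn => h; apply: hx; exists x.
by exists (x :: xs); rewrite /= sz; split => //; apply: Pbr.
Qed.

Lemma admx_nilpotent : exists N, forall u, admx br u ^+ N = 0.
Proof.
have [N HN] := Hnil; exists N => u; apply/row_matrixP => i.
by rewrite row0 rowE -(iter_br_nseq Hbr) HN ?size_nseq.
Qed.

Lemma admx_eigen0 x (u : V) (a : R) : u *m admx br x = a *: u -> a != 0 -> u = 0.
Proof.
move=> ux a0; have [N AN] := admx_nilpotent.
have uk k : u *m admx br x ^+ k = a ^+ k *: u.
  elim: k => [|k IH]; first by rewrite expr0 mulmx1 scale1r.
  by rewrite exprSr mulmxA IH -scalemxAl ux scalerA -exprSr.
move/eqP: (uk N); rewrite AN mulmx0 eq_sym scaler_eq0 expf_eq0 (negbTE a0) andbF.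
by move/eqP.
Qed.

End NilpotentLie.

Section LowerCentralSeries.
Variable br : V -> V -> V.
Hypothesis Hbr : is_lie_bracket br.

Definition lcs_gen k (t : k.-tuple 'I_6 * 'I_6) : V :=
  iter_br br [seq delta_mx 0 i | i <- t.1] (delta_mx 0 t.2).

Definition lcs k : 'M[R]_6 := (\sum_(t : k.-tuple 'I_6 * 'I_6) <<lcs_gen t>>)%MS.

Lemma lcs0 (y : V) : (y <= lcs 0)%MS.
Proof.
rewrite (row_sum_delta y); apply: summx_sub => j _; apply: scalemx_sub.
by apply: (sumsmx_sup ([tuple], j)) => //; rewrite genmxE.
Qed.

Lemma lcs_br k x y : (y <= lcs k)%MS -> (br x y <= lcs k.+1)%MS.
Proof.
case/sub_sumsmxP => u ->; rewrite (br_sumr Hbr); apply: summx_sub => t _.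
have /sub_rVP [a ->] : (u t *m <<lcs_gen t>> <= lcs_gen t)%MS.
  by rewrite -(genmxE (lcs_gen t)) submxMl.
rewrite (brZr Hbr); apply: scalemx_sub.
rewrite (row_sum_delta x) (br_suml Hbr); apply: summx_sub => i _; rewrite (brZl Hbr).
by apply/scalemx_sub/(sumsmx_sup ([tuple of i :: t.1], t.2)) => //; rewrite genmxE.
Qed.

Lemma lcs_nilpotent : nilpotent_bracket br -> exists N, lcs N.+1 = 0.
Proof.
case=> N HN; exists N; apply/eqP; rewrite -submx0; apply/sumsmx_subP => t _.
rewrite genmxE /lcs_gen; case: t => [[[|x xs] //= sz] j].
by rewrite HN ?(br0r Hbr) ?sub0mx // size_map; apply/eqP.
Qed.

Lemma lcs1_sub m (T : 'M[R]_(m, 6)) : (forall x y, (br x y <= T)%MS) -> (lcs 1 <= T)%MS.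
Proof.
move=> brT; apply/sumsmx_subP => t _; rewrite genmxE /lcs_gen.
by case: t => [[[|x [|? ?]] //= _] j].
Qed.

End LowerCentralSeries.

Section ClosedForm.
Variables (br : V -> V -> V) (J : 'M[R]_6).
Hypotheses (Hbr : is_lie_bracket br) (Hnil : nilpotent_bracket br)
  (HJ : is_complex_structure br J).

Lemma cspan_lcs_br k :
  row_full (cspan J (lcs br k)) -> forall x y, (br x y <= cspan J (lcs br k.+1))%MS.
Proof.
case: HJ => JJ Nij full x y; set L := lcs br k.+1.
have brL a z : (a <= lcs br k)%MS -> (br z a <= L)%MS /\ (br a z <= L)%MS.
  by move=> aL; split; [|rewrite (brC Hbr) eqmx_opp]; apply: lcs_br.
have dec (v : V) : exists a b,
    [/\ v = a + b *m J, (a <= lcs br k)%MS & (b <= lcs br k)%MS].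
  have /sub_addsmxP [[u1 u2] /= ->] := submx_full v full.
  by exists (u1 *m lcs br k), (u2 *m lcs br k); rewrite !submxMl mulmxA.
have inL (w : V) : (w <= L)%MS -> (w <= cspan J L)%MS /\ (w *m J <= cspan J L)%MS.
  move=> wL; rewrite (submx_trans wL (addsmxSl _ _)).
  by rewrite (submx_trans (submxMr J wL) (addsmxSr _ _)).
have [a [b [-> aL bL]]] := dec x; have [c [d [-> cL dL]]] := dec y.
rewrite (brDl Hbr) !(brDr Hbr) Nij !addmx_sub //.
- exact: (inL _ (brL _ _ aL).2).1.
- exact: (inL _ (brL _ _ aL).2).1.
- exact: (inL _ (brL _ _ cL).1).1.
- exact: (inL _ (brL _ _ dL).1).1.
- exact: (inL _ (brL _ _ dL).1).2.
- exact: (inL _ (brL _ _ bL).2).2.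
Qed.

Lemma cspan_lcs1_not_full : ~~ row_full (cspan J (lcs br 1)).
Proof.
apply/negP => full; have JJ := HJ.1.
have fullS m : row_full (cspan J (lcs br m.+1)).
  elim: m => // m IH; rewrite -sub1mx (submx_trans (submx_full _ full)) //.
  by rewrite cspan_sub ?cspan_stable // lcs1_sub // => x y; apply: cspan_lcs_br.
have [N lcsN] := lcs_nilpotent Hbr Hnil.
by move: (fullS N); rewrite /row_full /cspan lcsN mul0mx addsmx0 mxrank0.
Qed.

Lemma exists_closed_form :
  exists c : 'cV[R]_6, c != 0 /\ forall x y, (br x y <= ker_omega J c)%MS.
Proof.
set S := cspan J (lcs br 1).
have [y /sub_kermxP yS y0] : exists2 y : V, (y <= kermx S^T)%MS & ~~ (y <= (0 : 'M_6))%MS.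
  apply: exists_row_notin; rewrite mxrank0 mxrank_ker mxrank_tr subn_gt0.
  by rewrite ltn_neqAle rank_leq_col andbT cspan_lcs1_not_full.
have Sc : S *m y^T = 0 by rewrite -[S]trmxK -trmx_mul yS trmx0.
have killS m (A : 'M_(m, 6)) : (A <= S)%MS -> A *m y^T = 0.
  by case/submxP => D ->; rewrite -mulmxA Sc mulmx0.
exists y^T; split=> [|x z]; first by rewrite trmx_eq0 -submx0.
have brS : (br x z <= lcs br 1)%MS := lcs_br Hbr x (lcs0 br z).
apply/sub_ker_omegaP; split; apply: killS.
  exact: submx_trans brS (addsmxSl _ _).
exact: submx_trans (submxMr J brS) (addsmxSr _ _).
Qed.

End ClosedForm.

Section Center.
Variables (br : V -> V -> V) (m : nat) (W : 'M[R]_(m, 6)).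
Hypotheses (Hbr : is_lie_bracket br) (brW : forall x y, (br x y <= W)%MS).

Definition in_center (v : V) := (v <= W)%MS /\ forall y, (y <= W)%MS -> br y v = 0.

Lemma in_center_br x v : in_center v -> in_center (br x v).
Proof.
case=> vW vc; split=> // y yW; case: (Hbr) => _ _ _ /(_ y x v).
rewrite (brC Hbr v y) (vc y yW) oppr0 (br0r Hbr) addr0.
by rewrite (brC Hbr v) (vc _ (brW y x)) oppr0 addr0.
Qed.

End Center.

(* Integrability with [X, z] = 0 gives [XJ, zJ] = [X, zJ] J. *)
Lemma admx_J_central br J z : is_lie_bracket br -> is_complex_structure br J ->
  (forall x, br x z = 0) -> admx br (z *m J) *m J = J *m admx br (z *m J).
Proof.
move=> Hbr [_ Nij] zc; apply/row_matrixP => i; rewrite !rowE !mulmxA !(admxE Hbr).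
by rewrite (brC Hbr _ (_ *m J)) Nij !zc mul0mx !add0r (brC Hbr (z *m J)) mulNmx.
Qed.

Definition adapted_flag (br : V -> V -> V) (W : 'M[R]_6) (v2 v3 v4 v5 : V) :=
  [/\ (v2 + (v3 + (v4 + v5)) == W)%MS,
      forall x, (br x v2 <= v3 + (v4 + v5))%MS,
      forall x, (br x v3 <= v4 + v5)%MS,
      forall x, (br x v4 <= v5)%MS &
      [/\ forall x, br x v5 = 0, br v2 v4 = 0 & br v3 v4 = 0]].

Section AdaptedFlag.
Variables (br : V -> V -> V) (J : 'M[R]_6) (c : 'cV[R]_6).
Hypotheses (Hbr : is_lie_bracket br) (Hnil : nilpotent_bracket br)
  (HJ : is_complex_structure br J) (c0 : c != 0)
  (brW : forall x y, (br x y <= ker_omega J c)%MS).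
Local Notation W := (ker_omega J c).

Let JJ := HJ.1.
Let rankW : \rank W = 4%N := mxrank_ker_omega JJ c0.
Let brW_sub x v : (v <= W)%MS -> (br x v <= W)%MS := fun=> brW x v.

Lemma central_J_kills_W z :
  z != 0 -> (z <= W)%MS -> (forall x, br x z = 0) -> (W <= kermx (admx br (z *m J)))%MS.
Proof.
move=> z0 zW zc; pose u := z *m J; pose A := admx br u; pose P := cspan J z.
have AJ : A *m J = J *m A := admx_J_central Hbr HJ zc.
have PA : (P <= kermx A)%MS.
  by rewrite cspan_sub ?kermx_stable //; apply/sub_kermxP; rewrite (admxE Hbr) zc.
have [w wW wP] : exists2 w : V, (w <= W)%MS & ~~ (w <= P)%MS.
  by apply: exists_row_notin; rewrite rankW mxrank_cspan.
have WwP : (W <= cspan J w + P)%MS.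
  have wPW : (cspan J w + P <= W)%MS by rewrite addsmx_sub !cspan_sub ?ker_omega_stable.
  rewrite -(mxrank_leqif_sup wPW).2 rankW mxrank_adds_cspan ?cspan_stable //.
  by rewrite mxrank_cspan.
have [N AN] := admx_nilpotent Hbr Hnil.
(* ad u is complex-linear on W = P + C w, kills P and is nilpotent, so it maps
   w into P ... *)
have wA_P : (w *m A <= P)%MS.
  have /sub_addsmxP [[p q] /= wApq] : (w *m A <= cspan J w + P)%MS.
    by rewrite (admxE Hbr) (submx_trans (brW _ _) WwP).
  have [g pg] := sub_cspanP (submxMl p (cspan J w)).
  have wAg : (w *m A - w *m cmx J g <= P)%MS by rewrite wApq -pg addrC addKr submxMl.
  have g0 := nilpotent_cmx_eigen JJ AJ PA (cspan_stable JJ z) wP wAg (AN u).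
  by move: wAg; rewrite g0 cmx0 mulmx0 subr0.
(* ... and [u, w] = z al with al != 0 would give w1 = w (-i / al) with
   [w1, u] = u, contradicting the nilpotency of ad w1. *)
have [al wAal] := sub_cspanP wA_P.
have wA0 : w *m A = 0.
  have [al0 | alN0] := eqVneq al 0; first by rewrite wAal al0 cmx0 mulmx0.
  case/negP: z0; pose w1 := w *m cmx J (- 'i%C / al).
  have uw1 : u *m admx br w1 = 1 *: u.
    rewrite (admxE Hbr) (brC Hbr) -(admxE Hbr) -mulmxA -cmx_comm // mulmxA wAal.
    rewrite -mulmxA -(cmxM JJ) mulrC divfK // /cmx /= oppr0 raddf0 add0r scaleN1r.
    by rewrite mulmxN opprK scale1r.
  by rewrite -oppr_eq0 -(mulmxJJ JJ z) -/u (admx_eigen0 Hbr Hnil uw1) ?oner_eq0 ?mul0mx.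
have : (cspan J w + P <= kermx A)%MS.
  by rewrite addsmx_sub PA andbT cspan_sub ?kermx_stable //; apply/sub_kermxP.
exact: submx_trans WwP.
Qed.

Lemma exists_central_pair :
  exists z, [/\ z != 0, in_center br W z & in_center br W (z *m J)].
Proof.
have [y0 y0W y0n0] : exists2 y : V, (y <= W)%MS & ~~ (y <= (0 : 'M_6))%MS.
  by apply: exists_row_notin; rewrite mxrank0 rankW.
have [z [zW z0 zc]] := nilpotent_ad_step Hnil brW_sub y0W y0n0.
rewrite submx0 in z0; have {}zc x : br x z = 0 by apply/eqP; rewrite -submx0.
exists z; split=> //; split=> [|y yW].
  exact: submx_trans (submxMr J zW) (ker_omega_stable JJ c).
have /sub_kermxP := submx_trans yW (central_J_kills_W z0 zW zc).
by rewrite (admxE Hbr) => uy; rewrite (brC Hbr) uy oppr0.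
Qed.

Lemma exists_adapted_flag : exists v2 v3 v4 v5, adapted_flag br W v2 v3 v4 v5.
Proof.
have [z [z0 zZ zJZ]] := exists_central_pair.
have Zbr := in_center_br Hbr brW.
have zn0 : ~~ (z <= (0 : 'M_6))%MS by rewrite submx0.
have [v5 [v5Z v5n0 v5c]] := nilpotent_ad_step Hnil Zbr zZ zn0.
have r5 : \rank v5 = 1%N by rewrite rank_rV -submx0 v5n0.
have [y4 y4Z y4n] : exists2 y, in_center br W y & ~~ (y <= v5)%MS.
  have : ~~ (cspan J z <= v5)%MS by apply/negP => /mxrankS; rewrite mxrank_cspan // r5.
  by rewrite addsmx_sub negb_and => /orP [zn | zJn]; [exists z | exists (z *m J)].
have [v4 [v4Z v4n v4c]] := nilpotent_ad_step Hnil Zbr y4Z y4n.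
have r4 : \rank (v4 + v5)%MS = 2%N by rewrite mxrank_adds_row_notin // r5.
have [y3 y3W y3n] : exists2 y : V, (y <= W)%MS & ~~ (y <= v4 + v5)%MS.
  by apply: exists_row_notin; rewrite r4 rankW.
have [v3 [v3W v3n v3c]] := nilpotent_ad_step Hnil brW_sub y3W y3n.
have r3 : \rank (v3 + (v4 + v5))%MS = 3%N by rewrite mxrank_adds_row_notin // r4.
have [y2 y2W y2n] : exists2 y : V, (y <= W)%MS & ~~ (y <= v3 + (v4 + v5))%MS.
  by apply: exists_row_notin; rewrite r3 rankW.
have [v2 [v2W v2n v2c]] := nilpotent_ad_step Hnil brW_sub y2W y2n.
exists v2, v3, v4, v5; split => //; last first.
  split=> [x||]; [by apply/eqP; rewrite -submx0 | exact: v4Z.2 | exact: v4Z.2].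
rewrite -(mxrank_leqif_eq _).2 1?mxrank_adds_row_notin ?r3 ?rankW //.
by rewrite !addsmx_sub v2W v3W v4Z.1 v5Z.1.
Qed.

End AdaptedFlag.

Lemma sum_alternating (T : comRingType) n (x y : 'I_n -> T) (G : 'I_n -> 'I_n -> T) :
  (forall i, G i i = 0) -> (forall i j, G j i = - G i j) ->
  \sum_(i < n) \sum_(j < n) x i * y j * G i j
  = \sum_(i < n) \sum_(j < n | (i < j)%N) G i j * (x i * y j - x j * y i).
Proof.
move=> G0 GC.
have lower : \sum_(i < n) \sum_(j < n | (j < i)%N) x i * y j * G i j
           = - \sum_(i < n) \sum_(j < n | (i < j)%N) G i j * (x j * y i).
  rewrite (exchange_big_dep xpredT) //= -sumrN; apply: eq_bigr => i _.
  by rewrite -sumrN; apply: eq_bigr => j _; rewrite GC; ring.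
under [RHS]eq_bigr => i _ do rewrite (eq_bigr _ (fun j _ => mulrBr _ _ _)) sumrB.
rewrite sumrB -lower -big_split; apply: eq_bigr => i _ /=.
rewrite (bigID (fun j : 'I_n => (i < j)%N)) /=; congr (_ + _).
  by apply: eq_bigr => j _; ring.
rewrite (bigD1 i) ?ltnn //= G0 mulr0 add0r; apply: eq_bigl => j.
by rewrite -leqNgt ltn_neqAle andbC.
Qed.

(* [G] is indexed from 0, whereas [S] and [ef] count from 1. *)
Lemma in_span2_pairs (E : 'M[R]_6) (S : seq (nat * nat)) (w : V -> V -> R)
    (G : 'I_6 -> 'I_6 -> R) :
  uniq S -> all (fun p => (0 < p.1 < p.2) && (p.2 <= 6))%N S ->
  (forall i j : 'I_6, (i < j)%N -> (i.+1, j.+1) \notin S -> G i j = 0) ->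
  (forall X Y, w X Y = \sum_(i < 6) \sum_(j < 6 | (i < j)%N)
                         G i j * wedge (ef E i.+1) (ef E j.+1) X Y) ->
  in_span2 E S w.
Proof.
move=> Su Srange G0 wE; exists (fun p => G (inord p.1.-1) (inord p.2.-1)) => X Y.
pose f (p : 'I_6 * 'I_6) := (p.1.+1, p.2.+1).
pose Q (p : 'I_6 * 'I_6) := (p.1 < p.2)%N && (f p \in S).
have f_inj : injective f by move=> [a b] [a' b'] [ea eb]; congr (_, _); apply: val_inj.
have perm_S : perm_eq S [seq f p | p <- index_enum ('I_6 * 'I_6)%type & Q p].
  apply: uniq_perm => //; first by rewrite map_inj_uniq ?filter_uniq ?index_enum_uniq.
  move=> [a b]; apply/idP/mapP => [abS | [p] ]; last first.
    by rewrite mem_filter => /andP [/andP [_ ?] _] ->.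
  move: (allP Srange _ abS) => /= /andP [/andP [a0 ab] b6].
  have fab : f (inord a.-1, inord b.-1) = (a, b) by rewrite /f /= !inordK ?prednK //; lia.
  exists (inord a.-1, inord b.-1) => //.
  by rewrite mem_filter mem_index_enum andbT /Q fab abS andbT /= !inordK; lia.
rewrite wE pair_big_dep (bigID Q) /= [X in _ + X]big1 ?addr0; last first.
  by move=> p /andP [lt nQ]; rewrite G0 ?mul0r //; move: nQ; rewrite /Q lt.
rewrite (perm_big _ perm_S) big_map big_filter.
by apply: eq_big => [p | p _]; rewrite /Q ?andbA ?andbb //= !inord_val.
Qed.

Lemma d1_ef_expand br (B E : 'M[R]_6) (k : 'I_6) X Y :
  is_lie_bracket br -> E *m B = 1%:M ->
  d1 br (ef E k.+1) X Y = \sum_(i < 6) \sum_(j < 6 | (i < j)%N)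
    - (br (row i B) (row j B) *m E) 0 k * wedge (ef E i.+1) (ef E j.+1) X Y.
Proof.
move=> Hbr EB; pose G i j := (br (row i B) (row j B) *m E) 0 k.
have efE (m : 'I_6) Z : ef E m.+1 Z = (Z *m E) 0 m by rewrite /ef inord_val.
have expand Z : Z = \sum_(i < 6) (Z *m E) 0 i *: row i B.
  by rewrite -mulmx_sum_row -mulmxA EB mulmx1.
have coordZ a Z : ((a *: Z) *m E) 0 k = a * (Z *m E) 0 k by rewrite -scalemxAl !mxE.
have brE : (br X Y *m E) 0 k
         = \sum_(i < 6) \sum_(j < 6) (X *m E) 0 i * (Y *m E) 0 j * G i j.
  rewrite {1}[X]expand {1}[Y]expand (br_suml Hbr) mulmx_suml summxE.
  apply: eq_bigr => i _; rewrite (brZl Hbr) coordZ (br_sumr Hbr) mulmx_suml summxE.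
  rewrite big_distrr /=; apply: eq_bigr => j _.
  by rewrite (brZr Hbr) coordZ mulrA.
rewrite /d1 efE brE sum_alternating; first last.
- by move=> i j; rewrite /G (brC Hbr) mulNmx mxE.
- by move=> i; rewrite /G (brxx Hbr) mul0mx mxE.
rewrite -sumrN; apply: eq_bigr => i _; rewrite -sumrN; apply: eq_bigr => j _.
by rewrite /wedge !efE /G; ring.
Qed.

Section AdaptedBasis.
Variables (br : V -> V -> V) (J : 'M[R]_6) (c : 'cV[R]_6) (v0 v2 v3 v4 v5 : V).
Hypotheses (Hbr : is_lie_bracket br) (JJ : J *m J = - 1%:M)
  (v0c : v0 *m c = 1%:M) (v0Jc : v0 *m J *m c = 0)
  (brW : forall x y, (br x y <= ker_omega J c)%MS)
  (flag : adapted_flag br (ker_omega J c) v2 v3 v4 v5).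
Local Notation W := (ker_omega J c).

(* Row i is the basis vector dual to e^(i+1) = ef E i.+1. *)
Definition adapted_basis : 'M[R]_6 :=
  \matrix_(i < 6) [:: v0; v0 *m J; v2; v3; v4; v5]`_i.
Local Notation B := adapted_basis.
Local Notation E := (invmx adapted_basis).

Lemma adapted_rowE m : (m < 6)%N -> row (inord m) B = [:: v0; v0 *m J; v2; v3; v4; v5]`_m.
Proof. by move=> m6; rewrite rowK inordK. Qed.

Lemma flag_sub_W : (v2 <= W)%MS /\ [/\ (v3 <= W)%MS, (v4 <= W)%MS & (v5 <= W)%MS].
Proof. by case: flag => /andP [+ _] _ _ _ _; rewrite !addsmx_sub => /and4P []. Qed.

Lemma adapted_basis_unit : B \in unitmx.
Proof.
have rowB m : (m < 6)%N -> ([:: v0; v0 *m J; v2; v3; v4; v5]`_m <= B)%MS.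
  by move=> m6; rewrite -adapted_rowE // row_sub.
have WB : (W <= B)%MS.
  case: flag => /andP [_ WU] _ _ _ _; apply: submx_trans WU _.
  rewrite !addsmx_sub; apply/and4P; split.
  - exact: (rowB 2).
  - exact: (rowB 3).
  - exact: (rowB 4).
  - exact: (rowB 5).
rewrite -row_full_unit -sub1mx; apply/row_subP => i; set X := row i 1%:M.
pose a := X *m c; pose b := X *m J *m c.
pose w := X - a *m v0 + b *m (v0 *m J).
have wW : (w <= W)%MS.
  have v0JJc : v0 *m J *m J *m c = - 1%:M by rewrite mulmxJJ // mulNmx v0c.
  apply/sub_ker_omegaP; rewrite !mulmxDl !mulNmx -!(mulmxA a) -!(mulmxA b).
  by rewrite v0c v0Jc v0JJc !mulmx0 mulmxN !mulmx1 addr0 subr0 /a /b !subrr.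
have -> : X = w - b *m (v0 *m J) + a *m v0 by rewrite /w addrK subrK.
apply: addmx_sub; last exact: submx_trans (submxMl _ _) (rowB 0%N _).
apply: addmx_sub; first exact: submx_trans wW WB.
by rewrite eqmx_opp (submx_trans (submxMl _ _) (rowB 1%N _)).
Qed.

Lemma adapted_coord (i : 'I_6) : row i B *m E = delta_mx 0 i.
Proof. by rewrite -row_mul mulmxV ?adapted_basis_unit // row1. Qed.

Lemma adapted_efE (f : 'cV[R]_6) (k : 'I_6) :
  (forall i : 'I_6, (row i B *m f) 0 0 = (i == k)%:R) ->
  forall X, ef E k.+1 X = (X *m f) 0 0.
Proof.
move=> Bf X; rewrite /ef inord_val (dual_form X adapted_basis_unit (f := f)) //.
by apply/colP => i; have := Bf i; rewrite -row_mul mxE => ->; rewrite mxE eqxx andbT.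
Qed.

Lemma adapted_ef1 X : ef E 1 X = (X *m c) 0 0.
Proof.
have [v2W [v3W v4W v5W]] := flag_sub_W.
apply: (adapted_efE (k := 0)) => i; rewrite rowK.
case: i => [[|[|[|[|[|[|//]]]]]] ?] /=; rewrite ?v0c ?v0Jc; try by rewrite mxE.
- exact: (ker_omega_coord v2W).1.
- exact: (ker_omega_coord v3W).1.
- exact: (ker_omega_coord v4W).1.
- exact: (ker_omega_coord v5W).1.
Qed.

Lemma adapted_ef2 X : ef E 2 X = - (X *m J *m c) 0 0.
Proof.
have [v2W [v3W v4W v5W]] := flag_sub_W.
have -> : - (X *m J *m c) 0 0 = (X *m - (J *m c)) 0 0 by rewrite mulmxN mulmxA [RHS]mxE.
apply: (adapted_efE (k := 1)) => i; rewrite rowK mulmxN mulmxA [LHS]mxE.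
case: i => [[|[|[|[|[|[|//]]]]]] ?] /=; rewrite ?v0Jc ?(mulmxJJ JJ) ?mulNmx ?v0c.
- by rewrite mxE oppr0.
- by rewrite !mxE opprK.
- by rewrite (ker_omega_coord v2W).2 oppr0.
- by rewrite (ker_omega_coord v3W).2 oppr0.
- by rewrite (ker_omega_coord v4W).2 oppr0.
- by rewrite (ker_omega_coord v5W).2 oppr0.
Qed.

Lemma adapted_10_form : is_10_form J (cform (ef E 1) (ef E 2)).
Proof.
move=> X; have XJJ : (X *m J *m J *m c) 0 0 = - (X *m c) 0 0.
  by rewrite (mulmxJJ JJ) mulNmx [LHS]mxE.
rewrite /cform !adapted_ef1 !adapted_ef2 XJJ opprK /GRing.mul /=.
by congr Complex; ring.
Qed.

Lemma adapted_closed : closed_cform br (cform (ef E 1) (ef E 2)).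
Proof.
move=> X Y; have [c1 c2] := ker_omega_coord (brW X Y).
by rewrite /cform adapted_ef1 adapted_ef2 c1 c2 !oppr0.
Qed.

Lemma adapted_row_ker (m : nat) (k : 'I_6) :
  (m < 6)%N -> m != k -> ([:: v0; v0 *m J; v2; v3; v4; v5]`_m <= kermx (col k E))%MS.
Proof.
move=> m6 mk; apply/sub_kermxP; rewrite -adapted_rowE // colE mulmxA -colE adapted_coord.
apply/colP => i; rewrite !mxE (_ : (k == inord m) = false) ?andbF //.
by apply/negbTE; rewrite -val_eqE /= inordK // eq_sym.
Qed.

Lemma kermx_col_coord (y : V) (k : 'I_6) : (y <= kermx (col k E))%MS -> (y *m E) 0 k = 0.
Proof.
move/sub_kermxP; rewrite colE mulmxA -colE => yk.
have -> : (y *m E) 0 k = col k (y *m E) 0 0 by rewrite [RHS]mxE.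
by rewrite yk mxE.
Qed.

Lemma adapted_structure_const0 (i j k : 'I_6) : (2 <= k)%N ->
  (k <= j)%N || ((i : nat, j : nat) \in [:: (2, 4); (3, 4)]%N) ->
  (br (row i B) (row j B) *m E) 0 k = 0.
Proof.
case: flag => _ br2 br3 br4 [br5 br24 br34] k2 /orP [kj | ij]; last first.
  move: ij; rewrite !inE !rowK => /orP [] /eqP [-> ->] /=;
    by rewrite ?br24 ?br34 mul0mx mxE.
apply: kermx_col_coord; case: j kj => [[|[|[|[|[|[|//]]]]]] ?] /= kj; rewrite !rowK /=;
  try by exfalso; lia.
- apply: submx_trans (br2 _) _; rewrite !addsmx_sub.
  by rewrite (adapted_row_ker (m := 3)) ?(adapted_row_ker (m := 4))
    ?(adapted_row_ker (m := 5)) //; lia.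
- apply: submx_trans (br3 _) _; rewrite addsmx_sub.
  by rewrite (adapted_row_ker (m := 4)) ?(adapted_row_ker (m := 5)) //; lia.
- by apply: submx_trans (br4 _) _; rewrite (adapted_row_ker (m := 5)) //; lia.
- by rewrite br5 sub0mx.
Qed.

Lemma adapted_d1_in_span2 (k : nat) (S : seq (nat * nat)) :
  (2 <= k < 6)%N -> uniq S -> all (fun p => (0 < p.1 < p.2) && (p.2 <= 6))%N S ->
  (forall i j : 'I_6, (i < j)%N -> (i.+1, j.+1) \notin S ->
     (k <= j)%N || ((i : nat, j : nat) \in [:: (2, 4); (3, 4)]%N)) ->
  in_span2 E S (d1 br (ef E k.+1)).
Proof.
case/andP => k2 k6 Su Srange Svanish.
pose G i j := - (br (row i B) (row j B) *m E) 0 (Ordinal k6).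
apply: (in_span2_pairs Su Srange (G := G)).
  by move=> i j ij nS; rewrite /G adapted_structure_const0 ?oppr0 ?Svanish.
move=> X Y; exact: (d1_ef_expand (Ordinal k6) X Y Hbr (mulVmx adapted_basis_unit)).
Qed.

End AdaptedBasis.


Theorem corollary2p4 (br : V -> V -> V) (J : 'M[Rdefinitions.R]_6) :
  is_lie_bracket br -> nilpotent_bracket br -> is_complex_structure br J ->
  exists E : 'M[Rdefinitions.R]_6,
    [/\ E \in unitmx,
        is_10_form J (cform (ef E 1) (ef E 2)) &
        closed_cform br (cform (ef E 1) (ef E 2))] /\
    [/\ in_span2 E [:: (1,2)%N] (d1 br (ef E 3)),
        in_span2 E [:: (1,2); (1,3); (2,3)]%N (d1 br (ef E 4)),
        in_span2 E [:: (1,2); (1,3); (1,4); (2,3); (2,4); (3,4)]%N (d1 br (ef E 5)) &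
        in_span2 E [:: (1,2); (1,3); (1,4); (1,5); (2,3); (2,4); (2,5); (3,4)]%N
                 (d1 br (ef E 6))].
Proof.
move=> Hbr Hnil HJ; have JJ := HJ.1.
have [c [c0 brW]] := exists_closed_form Hbr Hnil HJ.
have [v0 [v0c v0Jc]] := exists_omega_dual JJ c0.
have [v2 [v3 [v4 [v5 flag]]]] := exists_adapted_flag Hbr Hnil HJ c0 brW.
exists (invmx (adapted_basis J v0 v2 v3 v4 v5)); split; first split.
- by rewrite unitmx_inv (adapted_basis_unit JJ v0c v0Jc flag).
- exact: (adapted_10_form JJ v0c v0Jc flag).
- exact: (adapted_closed JJ v0c v0Jc brW flag).
split; apply: (adapted_d1_in_span2 Hbr JJ v0c v0Jc flag) => //;
  by move=> [[|[|[|[|[|[|//]]]]]] ?] [[|[|[|[|[|[|//]]]]]] ?].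
Qed.
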